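(* Let $\{\sigma_j\colon\mathcal{A}^+\to\mathcal{B}_j^+\}_{j\in J}$ be a family of morphisms such that for every $a\in\mathcal{A}$ the length $\ell_a:=|\sigma_j(a)|$ does not depend on $j\in J$, and let $u,v\in\mathcal{A}^+$ with $|u|\ge\ell:=\sum_{a\in\mathcal{A}}\ell_a$. Assume that $u$ and $v$ start with different letters and that $\sigma_j(u)$ is a prefix of $\sigma_j(v)$ for every $j\in J$. Then there exist a letter-onto morphism $q\colon\mathcal{A}^+\to\mathcal{C}^+$ with $\#\mathcal{C}<\#\mathcal{A}$ and morphisms $\{p_j\colon\mathcal{C}^+\to\mathcal{B}_j^+\}_{j\in J}$ such that for every $c\in\mathcal{C}$ the length $|p_j(c)|$ does not depend on $j\in J$, and $\sigma_j=p_jq$ for every $j\in J$.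
   Context: Alphabets are finite sets; $\mathcal{A}^+$ is the free semigroup of nonempty finite words over $\mathcal{A}$; a morphism is a semigroup homomorphism (determined by images of letters). A word $w$ is a prefix of $w'$ if $w'=ws$ for some possibly empty word $s$. A morphism $q\colon\mathcal{A}^+\to\mathcal{C}^+$ is letter-onto if every letter of $\mathcal{C}$ occurs in some $q(a)$. *)

From mathcomp Require Import all_boot.
Set Implicit Arguments. Unset Strict Implicit. Unset Printing Implicit Defensive.

(* A morphism A^+ -> B^+ is represented by its images of letters f : A -> seq B,
   all of which must be nonempty words. *)
Definition is_morphism (A B : Type) (f : A -> seq B) : Prop :=
  forall a, f a <> [::].

Definition morph_app (A B : Type) (f : A -> seq B) (w : seq A) : seq B :=
  flatten (map f w).

Definition letter_onto (A : Type) (C : eqType) (q : A -> seq C) : Prop :=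
  forall c : C, exists a : A, c \in q a.

(** Induction on ell = \sum_a ell_a, after weakening "sigma_j(u) is a prefix of
    sigma_j(v)" to the symmetric "sigma_j(u) and sigma_j(v) share a prefix of
    length ell", so that we may swap u and v.  Write u = a u', v = b v' with
    ell_a <= ell_b; then every sigma_j(a) is a prefix of sigma_j(b).  If
    ell_a = ell_b, then sigma_j(a) = sigma_j(b) and identifying a with b does it.
    Otherwise sigma_j = tau_j o phi, where phi maps b to ab and fixes the other
    letters, and tau_j(b) is sigma_j(b) with its prefix sigma_j(a) removed.  The
    words phi(u') and b phi(v') start differently and their tau_j-images share a
    prefix of length ell - ell_a, the total length of tau, so the induction
    hypothesis factors tau, and composing with phi factors sigma. *)

From mathcomp Require Import all_boot.
From Stdlib Require Import Classical_Prop.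

Set Implicit Arguments. Unset Strict Implicit. Unset Printing Implicit Defensive.

Lemma morph_app_cons (A B : Type) (f : A -> seq B) x w :
  morph_app f (x :: w) = f x ++ morph_app f w.
Proof. by []. Qed.

Lemma morph_app_cat (A B : Type) (f : A -> seq B) s t :
  morph_app f (s ++ t) = morph_app f s ++ morph_app f t.
Proof. by rewrite /morph_app map_cat flatten_cat. Qed.

Lemma morph_app_comp (A B C : Type) (g : B -> seq C) (f : A -> seq B) w :
  morph_app g (morph_app f w) = morph_app (fun x => morph_app g (f x)) w.
Proof. by elim: w => // x w IH; rewrite !morph_app_cons morph_app_cat IH. Qed.

Lemma eq_morph_app (A B : Type) (f g : A -> seq B) : f =1 g -> morph_app f =1 morph_app g.
Proof. by move=> fg w; rewrite /morph_app (eq_map fg). Qed.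

Lemma size_morph_app (A B : Type) (f : A -> seq B) w :
  is_morphism f -> size w <= size (morph_app f w).
Proof.
move=> f_ne0; elim: w => // x w IH; rewrite morph_app_cons size_cat.
by case: (f x) (f_ne0 x) => // y s _; rewrite addSn ltnS (leq_trans IH (leq_addl _ _)).
Qed.

Lemma is_morphism_comp (A B C : Type) (g : B -> seq C) (f : A -> seq B) :
  is_morphism g -> is_morphism f -> is_morphism (fun x => morph_app g (f x)).
Proof.
move=> g_ne0 f_ne0 x; case: (f x) (f_ne0 x) => // y s _.
by rewrite morph_app_cons; case: (g y) (g_ne0 y).
Qed.

Lemma letter_onto_comp (A : Type) (B C : eqType) (g : B -> seq C) (f : A -> seq B) :
  letter_onto g -> letter_onto f -> letter_onto (fun x => morph_app g (f x)).
Proof.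
move=> g_onto f_onto c; have [y c_gy] := g_onto c; have [x y_fx] := f_onto y.
by exists x; apply/flatten_mapP; exists y.
Qed.

Section SharePrefix.

Variable T : eqType.
Implicit Types (s t x y : seq T) (n : nat).

Definition share_prefix n s t :=
  [&& n <= size s, n <= size t & take n s == take n t].

Lemma share_prefixC n s t : share_prefix n s t = share_prefix n t s.
Proof. by rewrite /share_prefix andbCA eq_sym. Qed.

Lemma share_prefix_of_prefix n s t :
  prefix s t -> n <= size s -> share_prefix n s t.
Proof.
move=> st ns; have := size_prefix st; rewrite prefixE in st.
by move=> size_st; rewrite /share_prefix ns (leq_trans ns) //= -(eqP st) take_takel.
Qed.

Lemma share_prefix_cat2l n x s t : size x <= n ->
  share_prefix n (x ++ s) (x ++ t) = share_prefix (n - size x) s t.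
Proof.
move=> xn; rewrite /share_prefix !size_cat -!leq_subLR !take_cat ltnNge xn /=.
by rewrite eqseq_cat // eqxx.
Qed.

Lemma share_prefix_take n x y s t : share_prefix n (x ++ s) (y ++ t) ->
  size x <= n -> size x <= size y -> x = take (size x) y.
Proof.
case/and3P=> _ _ /eqP eq_take xn xy.
by rewrite -[LHS](take_size_cat s erefl) -(take_takel _ xn) eq_take take_takel // takel_cat.
Qed.

End SharePrefix.

Definition simplifiable (A : finType) (J : Type) (B : J -> finType)
    (sigma : forall j : J, A -> seq (B j)) : Prop :=
  exists (C : finType) (q : A -> seq C),
    [/\ is_morphism q, letter_onto q, #|C| < #|A| &
      exists p : forall j : J, C -> seq (B j),
        [/\ forall j, is_morphism (p j),
            forall (j j' : J) (c : C), size (p j c) = size (p j' c) &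
            forall (j : J) (w : seq A),
              morph_app (sigma j) w = morph_app (p j) (morph_app q w)]].

Lemma simplifiable_comp (A A' : finType) (J : Type) (B : J -> finType)
    (sigma : forall j, A -> seq (B j)) (tau : forall j, A' -> seq (B j))
    (phi : A -> seq A') :
  #|A'| <= #|A| -> is_morphism phi -> letter_onto phi ->
  (forall j x, sigma j x = morph_app (tau j) (phi x)) ->
  simplifiable tau -> simplifiable sigma.
Proof.
move=> le_A'A phi_ne0 phi_onto sigma_tau.
case=> [C [q [q_ne0 q_onto ltCA' [p [p_ne0 p_size tau_pq]]]]].
exists C, (fun x => morph_app q (phi x)); split.
- exact: is_morphism_comp.
- exact: letter_onto_comp.
- exact: leq_trans le_A'A.
exists p; split=> // j w.
by rewrite (eq_morph_app (sigma_tau j) w) -morph_app_comp tau_pq -morph_app_comp.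
Qed.

Lemma simplifiable_merge (A : finType) (J : Type) (B : J -> finType)
    (sigma : forall j, A -> seq (B j)) (ell : A -> nat) (a b : A) :
  a != b -> (forall j, is_morphism (sigma j)) ->
  (forall j x, size (sigma j x) = ell x) ->
  (forall j, sigma j a = sigma j b) -> simplifiable sigma.
Proof.
move=> neq_ab sigma_ne0 size_sigma sigma_ab.
pose a' : {x : A | x != b} := exist _ a neq_ab.
exists {x : A | x != b}, (fun x => [:: insubd a' x]); split=> //.
- by move=> c; exists (val c); rewrite valKd mem_seq1.
- rewrite card_sig (@eq_card _ _ (predC1 b)) // cardC1 prednK //.
  by apply/card_gt0P; exists a.
exists (fun j c => sigma j (val c)); split=> [j c|j j' c|j w].
- exact: sigma_ne0.
- by rewrite !size_sigma.
rewrite morph_app_comp; apply: eq_morph_app => x.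
by rewrite /morph_app /= cats0 val_insubd; case: eqP => // ->.
Qed.

Section Expand.

Variables (A : eqType) (a b : A).

Definition expand (x : A) : seq A := if x == b then [:: a; b] else [:: x].

Lemma expand_morphism : is_morphism expand.
Proof. by move=> x; rewrite /expand; case: ifP. Qed.

Lemma expand_letter_onto : letter_onto expand.
Proof.
by move=> x; exists x; rewrite /expand; case: ifP => [/eqP->|_]; rewrite !inE eqxx ?orbT.
Qed.

Lemma ohead_expand w : a != b -> ohead (morph_app expand w) != Some b.
Proof. by case: w => // x w; rewrite morph_app_cons /expand; case: ifP => /= [_|/negbT]. Qed.

End Expand.

Section Strip.

Variables (A : finType) (J : Type) (B : J -> finType).
Variables (sigma : forall j, A -> seq (B j)) (ell : A -> nat) (a b : A).
Hypothesis size_sigma : forall j x, size (sigma j x) = ell x.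

Definition strip j x := if x == b then drop (ell a) (sigma j b) else sigma j x.

Definition strip_len x := if x == b then ell b - ell a else ell x.

Lemma size_strip j x : size (strip j x) = strip_len x.
Proof.
by rewrite /strip /strip_len; case: ifP => _; rewrite ?size_drop size_sigma.
Qed.

Hypothesis lt_ab : ell a < ell b.

Lemma strip_morphism : (forall j, is_morphism (sigma j)) -> forall j, is_morphism (strip j).
Proof.
move=> sigma_ne0 j x; rewrite /strip; case: ifP => _; last exact: sigma_ne0.
by move/(congr1 size); rewrite size_drop size_sigma => /eqP; rewrite subn_eq0 leqNgt lt_ab.
Qed.

Lemma sum_strip_len : \sum_x strip_len x + ell a = \sum_x ell x.
Proof.
rewrite (bigD1 b isT) [in RHS](bigD1 b isT) /= addnAC {1}/strip_len eqxx.
rewrite (subnK (ltnW lt_ab)); congr (_ + _).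
by apply: eq_bigr => x /negbTE; rewrite /strip_len => ->.
Qed.

Hypotheses (neq_ab : a != b) (sigma_a : forall j, sigma j a = take (ell a) (sigma j b)).

Lemma sigma_b_strip j : sigma j b = sigma j a ++ strip j b.
Proof. by rewrite /strip eqxx sigma_a cat_take_drop. Qed.

Lemma sigma_strip j x : sigma j x = morph_app (strip j) (expand a b x).
Proof.
rewrite /expand; case: ifP => [/eqP-> | neq_xb]; rewrite /morph_app /= cats0.
  by rewrite {1}/strip (negbTE neq_ab) -sigma_b_strip.
by rewrite /strip neq_xb.
Qed.

Lemma morph_app_strip_expand j w :
  morph_app (strip j) (morph_app (expand a b) w) = morph_app (sigma j) w.
Proof. by rewrite morph_app_comp (eq_morph_app (sigma_strip j) w). Qed.

End Strip.

Lemma simplifiable_of_share_prefix (A : finType) (J : Type) (B : J -> finType) (j0 : J)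
    (sigma : forall j, A -> seq (B j))
    (ell : A -> nat) (u v : seq A) :
  (forall j, is_morphism (sigma j)) -> (forall j x, size (sigma j x) = ell x) ->
  ohead u != ohead v ->
  (forall j, share_prefix (\sum_x ell x) (morph_app (sigma j) u) (morph_app (sigma j) v)) ->
  simplifiable sigma.
Proof.
have [n] := ubnP (\sum_x ell x).
elim: n => // n IH in sigma ell u v *; rewrite ltnS => le_sum_n sigma_ne0 size_sigma.
have ell_gt0 x : 0 < ell x.
  by rewrite -(size_sigma j0) lt0n size_eq0; apply/eqP/sigma_ne0.
have ell_le_sum x : ell x <= \sum_y ell y by rewrite (bigD1 x isT) leq_addr.
case: u v => [|a u] [|b v] // heads share.
- by case/and3P: (share j0) => /(leq_trans (ell_le_sum b)) /(leq_trans (ell_gt0 b)).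
- by case/and3P: (share j0) => _ /(leq_trans (ell_le_sum a)) /(leq_trans (ell_gt0 a)).
wlog le_ab : a b u v heads share / ell a <= ell b.
  move=> wlog_ab; have [|/ltnW] := leqP (ell a) (ell b); first exact: wlog_ab.
  by apply: wlog_ab; rewrite 1?eq_sym // => j; rewrite share_prefixC.
have neq_ab : a != b by [].
have {}share j : share_prefix (\sum_x ell x) (sigma j a ++ morph_app (sigma j) u)
    (sigma j b ++ morph_app (sigma j) v) := share j.
have sigma_a j : sigma j a = take (ell a) (sigma j b).
  rewrite -(size_sigma j a); apply: share_prefix_take (share j) _ _.
    by rewrite size_sigma ell_le_sum.
  by rewrite !size_sigma.
move: le_ab; rewrite leq_eqVlt => /predU1P[eq_ab | lt_ab].
  apply: (simplifiable_merge neq_ab sigma_ne0 size_sigma) => j.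
  by rewrite sigma_a eq_ab -(size_sigma j b) take_size.
apply: (simplifiable_comp (leqnn _) (@expand_morphism _ a b) (@expand_letter_onto _ a b)
  (sigma_strip neq_ab sigma_a)).
have sum_strip := sum_strip_len lt_ab.
apply: (IH _ (strip_len ell a b) (morph_app (expand a b) u) (b :: morph_app (expand a b) v)).
- apply: leq_trans le_sum_n; rewrite -sum_strip -[X in X < _]addn0 ltn_add2l.
  exact: ell_gt0.
- exact: strip_morphism.
- exact: size_strip.
- exact: ohead_expand.
move=> j; rewrite morph_app_cons !(morph_app_strip_expand neq_ab sigma_a).
have := share j; rewrite (sigma_b_strip sigma_a) -catA share_prefix_cat2l size_sigma.
  by rewrite -sum_strip addnK.
exact: ell_le_sum.
Qed.

Theorem lemma3p2 (A : finType) (J : Type) (B : J -> finType)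
    (sigma : forall j : J, A -> seq (B j))
    (hsigma : forall j, is_morphism (sigma j))
    (ell : A -> nat)
    (hell : forall (j : J) (a : A), size (sigma j a) = ell a)
    (u v : seq A) (hu : u <> [::]) (hv : v <> [::])
    (hlen : \sum_(a : A) ell a <= size u)
    (hfirst : ohead u <> ohead v)
    (hpref : forall j : J, prefix (morph_app (sigma j) u) (morph_app (sigma j) v)) :
  exists (C : finType) (q : A -> seq C),
    [/\ is_morphism q, letter_onto q, #|C| < #|A| &
      exists p : forall j : J, C -> seq (B j),
        [/\ forall j, is_morphism (p j),
            forall (j j' : J) (c : C), size (p j c) = size (p j' c) &
            forall (j : J) (w : seq A),
              morph_app (sigma j) w = morph_app (p j) (morph_app q w)]].
Proof.
have [[j0] | noJ] := classic (inhabited J).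
  apply: (simplifiable_of_share_prefix j0 (u := u) (v := v) hsigma hell).
    exact/eqP.
  move=> j; apply: share_prefix_of_prefix (hpref j) _.
  exact: leq_trans hlen (size_morph_app _ (hsigma j)).
case: u v hu hv hfirst {hlen hpref} => [|a u] [|b v] // _ _ hfirst.
apply: (simplifiable_merge (a := a) (b := b) _ hsigma hell) => [|j].
  by apply/eqP => eq_ab; apply: hfirst; rewrite eq_ab.
by case: (noJ (inhabits j)).
Qed.
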